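(* Let $q$ be a power of $2$, let $m\equiv2\pmod4$ with $m\ge6$, and let $n=q^m+1$. Then the largest coset leader modulo $n$ is $\delta_{1,n}=\frac{q(q-1)(q^m+1)}{2(q^2+1)}$, and $|C_{\delta_{1,n}}|=4$.
   Context: For $0\le s\le n-1$, $C_s=\{sq^i\bmod n:i\ge0\}$ is the $q$-cyclotomic coset of $s$ modulo $n$; its least element is its coset leader; $\delta_{i,n}$ denotes the $i$-th largest coset leader modulo $n$. *)

From mathcomp Require Import all_boot.
Set Implicit Arguments. Unset Strict Implicit. Unset Printing Implicit Defensive.

(* The map x |-> x*q mod n on {0..n-1} is iterated, so all values of the
   orbit already occur for i < n; we list them without duplicates. *)
Definition cyc_coset (q n s : nat) : seq nat :=
  undup [seq (s * q ^ i) %% n | i <- iota 0 n].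

Definition coset_leader (q n s : nat) : bool :=
  all (fun x => s <= x) (cyc_coset q n s).

Definition delta1 (q n : nat) : nat :=
  \max_(s < n | coset_leader q n s) s.

From mathcomp Require Import all_boot all_order all_algebra zify ring cyclic.
Set Implicit Arguments.
Unset Strict Implicit.
Unset Printing Implicit Defensive.
Import Order.TTheory GRing.Theory Num.Theory.

(* Write q = 2p, n = q^m + 1 and D = q (q - 1) n / (2 (q^2 + 1)).
   Let s > D be a coset leader and
   y_i = s q^i mod n.  As q^m = -1 mod n, y_(i+m) = n - y_i, so every y_i
   lies in [s, n - s], and d_i = 2 y_i - n satisfies |d_i| <= R := n - 2s,
   d_(i+m) = - d_i and, q being even, d_(i+1) = q d_i - sgn(d_i) n.  The
   hypothesis s > D reads (q^2 + 1) R < (q + 1) n.  Under it, two consecutive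
   positive d_i force the sign pattern ++-- forever, along which
   (q + 1) n - (q^2 + 1) d_i is multiplied by q^4 every four steps, which is
   impossible for a periodic sequence; hence the signs alternate, which
   contradicts d_(i+m) = - d_i for m even.
   Conversely, m/2 odd gives q^2 + 1 | n, and with N = n / (q^2 + 1) and
   a = q (q - 1) / 2 the coset of D = N a is N {a, a + 1, a + q + 1, a + q}:
   D is a leader and its coset has four elements. *)

Lemma leq_totient n : totient n <= n.
Proof.
rewrite totient_count_coprime.
apply: (@leq_trans (\sum_(0 <= d < n) 1)); first by apply: leq_sum => d _; apply: leq_b1.
by rewrite sum_nat_const_nat subn0 muln1.
Qed.

Section CyclotomicCoset.
Variables q n : nat.
Hypotheses (n_gt0 : 0 < n) (q_coprime : coprime q n).

Lemma cyc_cosetP s x :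
  reflect (exists i, x = s * q ^ i %% n) (x \in cyc_coset q n s).
Proof.
rewrite mem_undup; apply: (iffP mapP) => [[i _ ->]|[i ->]]; first by exists i.
have phi_gt0 : 0 < totient n by rewrite totient_gt0.
exists (i %% totient n).
  by rewrite mem_iota add0n (leq_trans (ltn_pmod _ _) (leq_totient n)).
rewrite {1}(divn_eq i (totient n)) [_ * totient n]mulnC expnD expnM mulnCA.
rewrite -modnMmr -modnMml -modnXm Euler_exp_totient // modnXm exp1n.
by rewrite modnMml mul1n modn_mod.
Qed.

Lemma coset_leaderP s :
  reflect (forall i, s <= s * q ^ i %% n) (coset_leader q n s).
Proof.
apply: (iffP allP) => [le_s i | le_s x /cyc_cosetP [i ->]] //.
by apply: le_s; apply/cyc_cosetP; exists i.
Qed.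

End CyclotomicCoset.

Lemma delta1_eq q n D : D < n -> coset_leader q n D ->
  (forall s, s < n -> coset_leader q n s -> s <= D) -> delta1 q n = D.
Proof.
move=> D_lt D_leader D_max; apply/eqP; rewrite eqn_leq.
apply/andP; split; first by apply/bigmax_leqP => s; apply: D_max.
exact: (leq_bigmax_cond (Ordinal D_lt)).
Qed.

Section SignedOrbit.
Local Open Scope ring_scope.

Variables (q n R : int) (m : nat) (d : nat -> int).
Hypotheses (q_ge2 : 2 <= q) (R_lt : (q ^+ 2 + 1) * R < (q + 1) * n).
Hypotheses (d_neq0 : forall i, d i != 0) (d_le : forall i, `|d i| <= R).
Hypothesis d_step : forall i, exists t, d i.+1 = q * d i + (2 * t + 1) * n.
Hypotheses (d_anti : forall i, d (i + m)%N = - d i) (m_even : ~~ odd m).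

Let d_bounds i : - R <= d i <= R. Proof. by rewrite -ler_norml. Qed.

Let R_ge0 : 0 <= R. Proof. exact: le_trans (normr_ge0 _) (d_le 0). Qed.

Let R_lt_n : R < n.
Proof.
have : q * R <= q ^+ 2 * R by rewrite ler_wpM2r // expr2 ler_peMl //; lia.
nia.
Qed.

Let R_lt_3n : (q + 1) * R < 3 * n.
Proof.
have : (q + 1) * ((q + 1) * R) <= (q + 1) * (3 * n) - (q + 1).
  have : (q + 1) * (q + 1) <= 3 * (q ^+ 2 + 1) by nia.
  nia.
nia.
Qed.

Lemma d_step_pos {i} : 0 < d i -> d i.+1 = q * d i - n.
Proof.
move=> d_gt0; have [t dS] := d_step i.
have /andP[_ di_le] := d_bounds i; have /andP[di1_ge di1_le] := d_bounds i.+1.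
have qd_le : q * d i <= q * R by rewrite ler_wpM2l //; lia.
suff t_eq : t = -1 by rewrite dS t_eq; ring.
case: (ltrgtP t (-1)) => // t_cmp; nia.
Qed.

Lemma d_step_neg {i} : d i < 0 -> d i.+1 = q * d i + n.
Proof.
move=> d_lt0; have [t dS] := d_step i.
have /andP[di_ge _] := d_bounds i; have /andP[di1_ge di1_le] := d_bounds i.+1.
have qd_ge : - (q * R) <= q * d i by rewrite -mulrN ler_wpM2l //; lia.
suff t_eq : t = 0 by rewrite dS t_eq; ring.
case: (ltrgtP t 0) => // t_cmp; nia.
Qed.

Let d_lt0 i : (d i < 0) = ~~ (0 < d i).
Proof. by rewrite ltNge le_eqVlt eq_sym (negPf (d_neq0 i)). Qed.

Let pos_anti i : (0 < d (i + m)) = (d i < 0).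
Proof. by rewrite d_anti oppr_gt0. Qed.

Lemma pos_pos_neg {i} : 0 < d i -> 0 < d i.+1 -> d i.+2 < 0.
Proof.
move=> d0_gt0 d1_gt0; rewrite d_lt0; apply/negP => d2_gt0.
move: d2_gt0; rewrite (d_step_pos d1_gt0) (d_step_pos d0_gt0) => d2_gt0.
have /andP[_ d0_le] := d_bounds i.
have : q ^+ 2 * d i <= q ^+ 2 * R by rewrite ler_wpM2l ?exprn_ge0 //; lia.
nia.
Qed.

Lemma pos_pos_neg_neg {i} : 0 < d i -> 0 < d i.+1 -> d i.+3 < 0.
Proof.
move=> d0_gt0 d1_gt0; have d2_lt0 := pos_pos_neg d0_gt0 d1_gt0.
rewrite d_lt0; apply/negP => d3_gt0.
have /andP[_ d0_le] := d_bounds i; have /andP[d4_ge _] := d_bounds i.+4.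
move: d4_ge; rewrite (d_step_pos d3_gt0) (d_step_neg d2_lt0).
rewrite (d_step_pos d1_gt0) (d_step_pos d0_gt0) => d4_ge.
have : q ^+ 4 * d i <= q ^+ 4 * R by rewrite ler_wpM2l ?exprn_ge0 //; lia.
have : (q ^+ 2 - 1) * ((q ^+ 2 + 1) * R) <= (q ^+ 2 - 1) * ((q + 1) * n).
  by rewrite ler_wpM2l ?ltW //; nia.
nia.
Qed.

Lemma neg_neg_pos_pos {i} : d i < 0 -> d i.+1 < 0 -> 0 < d i.+2 /\ 0 < d i.+3.
Proof.
move=> d0_lt0 d1_lt0.
have p0 : 0 < d (i + m) by rewrite pos_anti.
have p1 : 0 < d (i + m).+1 by rewrite -addSn pos_anti.
have := pos_pos_neg p0 p1; have := pos_pos_neg_neg p0 p1.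
by rewrite -!addSn !d_anti !oppr_lt0.
Qed.

Let m_gt0 : (0 < m)%N.
Proof.
rewrite lt0n; apply/eqP => m0.
by have := d_anti 0; have := d_neq0 0; rewrite m0 addn0; lia.
Qed.

Let m_double : m./2.*2 = m.
Proof. by rewrite -[RHS]odd_double_half (negPf m_even). Qed.

(* (q + 1) n / (q^2 + 1) is the fixed point of four steps of sign pattern ++--. *)
Let gap i := (q + 1) * n - (q ^+ 2 + 1) * d i.

Lemma pos_pos_shift4 {i} : 0 < d i -> 0 < d i.+1 ->
  [/\ 0 < d i.+4, 0 < d i.+4.+1 & gap i.+4 = q ^+ 4 * gap i].
Proof.
move=> p0 p1; have n2 := pos_pos_neg p0 p1; have n3 := pos_pos_neg_neg p0 p1.
have [p4 p5] := neg_neg_pos_pos n2 n3; split => //.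
by rewrite /gap (d_step_neg n3) (d_step_neg n2) (d_step_pos p1) (d_step_pos p0); ring.
Qed.

Lemma pos_pos_shift {i} k : 0 < d i -> 0 < d i.+1 ->
  [/\ 0 < d (i + 4 * k), 0 < d (i + 4 * k).+1 & gap (i + 4 * k) = q ^+ (4 * k) * gap i].
Proof.
move=> p0 p1; elim: k => [|k [pk pk1 gap_k]]; first by rewrite muln0 addn0 mul1r.
have [] := pos_pos_shift4 pk pk1.
by rewrite mulnS addnCA -addn4 addnC exprD -mulrA -gap_k.
Qed.

Lemma no_pos_pos {i} : 0 < d i -> 0 < d i.+1 -> False.
Proof.
move=> p0 p1; have [_ _] := pos_pos_shift (m./2) p0 p1.
have -> : (4 * m./2 = m + m)%N by rewrite -{2 3}m_double -muln2; lia.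
rewrite /gap addnA !d_anti opprK => gap_eq.
have gap_gt0 : 0 < (q + 1) * n - (q ^+ 2 + 1) * d i.
  have /andP[_ d_le_R] := d_bounds i.
  have : (q ^+ 2 + 1) * d i <= (q ^+ 2 + 1) * R by rewrite ler_wpM2l //; nia.
  lia.
have : 1 < q ^+ (m + m) by rewrite exprn_egt1 ?addn_eq0 -?lt0n ?m_gt0 //; lia.
nia.
Qed.

Lemma no_neg_neg {i} : d i < 0 -> d i.+1 < 0 -> False.
Proof. by rewrite -!pos_anti addSn; apply: no_pos_pos. Qed.

Lemma signed_orbit_false : False.
Proof.
have sign_flip i : (0 < d i.+1) = ~~ (0 < d i).
  have [p0|] := boolP (0 < d i); first by apply/negP => /(no_pos_pos p0).
  rewrite -d_lt0 => n0; rewrite -[0 < _]negbK -d_lt0.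
  by apply/negP => /(no_neg_neg n0).
have sign_even k : (0 < d k.*2) = (0 < d 0).
  by elim: k => // k IHk; rewrite doubleS !sign_flip negbK.
have := sign_even m./2; rewrite m_double.
by rewrite -[m]add0n d_anti oppr_gt0 d_lt0; case: (0 < d 0).
Qed.

End SignedOrbit.

Lemma dvdn_residue_sum x y n : 0 < x -> x < n -> y < n -> n %| x + y -> x + y = n.
Proof.
move=> x_gt0 x_lt y_lt /dvdnP[k sum_eq]; rewrite sum_eq in x_lt y_lt *.
by case: k sum_eq => [|[|k]] sum_eq; nia.
Qed.

Lemma signed_residue_mul_even p n y : exists t : int,
  ((2 * (2 * p * y %% n))%:Z - n%:Z = (2 * p)%:Z * ((2 * y)%:Z - n%:Z) + (2 * t + 1) * n%:Z)%R.
Proof.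
exists (p%:Z - (2 * p * y %/ n)%:Z - 1)%R.
by have := divn_eq (2 * p * y) n; nia.
Qed.

Section EvenBase.

Variables p m : nat.
Hypotheses (p_gt0 : 0 < p) (m_gt0 : 0 < m) (m_even : ~~ odd m).
Local Notation q := (2 * p).
Local Notation n := (q ^ m + 1).

Let n_gt0 : 0 < n. Proof. by rewrite addn1. Qed.

Lemma coprime_base_power : coprime q n.
Proof. by rewrite /coprime -(prednK m_gt0) expnS [_ * _ ^ _]mulnC gcdnMDl gcdn1. Qed.

Lemma coset_leader_le s :
  s < n -> coset_leader q n s -> 2 * (q ^ 2 + 1) * s <= q * (q - 1) * n.
Proof.
move=> s_lt /(coset_leaderP n_gt0 coprime_base_power) s_le.
rewrite leqNgt; apply/negP => big_s.
have s_gt0 : 0 < s by case: (posnP s) big_s => // ->; rewrite muln0.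
pose y i := s * q ^ i %% n.
have y_lt i : y i < n by rewrite ltn_mod addn1.
have y_ge i : s <= y i := s_le i.
have y_anti i : y (i + m) + y i = n.
  apply: dvdn_residue_sum => //; first exact: leq_trans s_gt0 (y_ge _).
  by rewrite /dvdn modnDm expnD mulnA -[X in _ + X]muln1 -mulnDr modnMl.
pose d i : int := ((2 * y i)%:Z - n%:Z)%R.
have n_odd : odd n by rewrite addn1 /= oddX oddM negb_or -lt0n m_gt0.
apply: (@signed_orbit_false q%:Z n%:Z (n%:Z - (2 * s)%:Z)%R m d) => // [||i|i|i|i].
- by lia.
- by nia.
- by rewrite /d; lia.
- by rewrite /d ler_norml; have := y_ge i; have := y_ge (i + m); have := y_anti i; lia.
- by rewrite /d /y expnS mulnCA -modnMmr; apply: signed_residue_mul_even.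
- by rewrite /d; have := y_anti i; lia.
Qed.

End EvenBase.

Lemma dvdn_add1_expn_odd x k : odd k -> x + 1 %| x ^ k + 1.
Proof.
move=> k_odd; rewrite -[k]odd_double_half k_odd.
elim: k./2 => [|j IHj]; first by rewrite expn1.
rewrite -(dvdn_addl _ (dvdn_mull x (dvdnn (x + 1)))).
have -> : x ^ (true + j.+1.*2) + 1 + x * (x + 1) = x ^ 2 * (x ^ (true + j.*2) + 1) + (x + 1).
  by rewrite doubleS !add1n !expnS; ring.
by rewrite dvdn_add // dvdn_mull.
Qed.

Lemma modn_small_eq x d t r : x = t * d + r -> r < d -> x %% d = r.
Proof. by move=> -> r_lt; rewrite modnMDl modn_small. Qed.

Section TopLeader.

Variables p m : nat.
Hypotheses (p_gt0 : 0 < p) (m_mod4 : m %% 4 = 2).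
Local Notation q := (2 * p).
Local Notation n := (q ^ m + 1).
Local Notation a := (p * (q - 1)).
Local Notation top_orbit := [:: a; a.+1; (a + q).+1; a + q].

Lemma top_residue_orbit i : a * q ^ i %% (q ^ 2 + 1) = nth 0 top_orbit (i %% 4).
Proof.
have [r p_eq] : exists r, p = r.+1 by exists p.-1; rewrite prednK.
have a_eq : a = r.+1 * (2 * r).+1 by rewrite p_eq; congr (_ * _); lia.
elim: i => [|i IHi]; first by rewrite expn0 muln1 modn_small // a_eq p_eq; nia.
rewrite expnS mulnCA -modnMmr IHi -[i.+1]addn1 -modnDml addn1.
case: (i %% 4) (ltn_pmod i (isT : 0 < 4)) => [|[|[|[|j]]]] //= _.
- apply: (@modn_small_eq _ _ r); rewrite a_eq p_eq; [ring | nia].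
- apply: (@modn_small_eq _ _ r); rewrite a_eq p_eq; [ring | nia].
- apply: (@modn_small_eq _ _ p); rewrite a_eq p_eq; [ring | nia].
- apply: (@modn_small_eq _ _ p); rewrite a_eq p_eq; [ring | nia].
Qed.

Let m_gt0 : 0 < m. Proof. lia. Qed.
Let m_even : ~~ odd m. Proof. lia. Qed.
Let n_gt0 : 0 < n. Proof. by rewrite addn1. Qed.

Lemma top_dvdn : q ^ 2 + 1 %| n.
Proof.
have m_eq : m = 2 * m./2 by lia.
by rewrite m_eq expnM; apply: dvdn_add1_expn_odd; lia.
Qed.

Local Notation N := (n %/ (q ^ 2 + 1)).
Local Notation D := (N * a).

Lemma top_leader_residue i : D * q ^ i %% n = N * nth 0 top_orbit (i %% 4).
Proof. by rewrite -top_residue_orbit muln_modr !mulnA (divnK top_dvdn). Qed.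

Lemma top_leader_lt : D < n.
Proof. by have := top_leader_residue 0; rewrite mod0n /= => <-; apply: ltn_pmod. Qed.

Lemma top_leader_eq : 2 * (q ^ 2 + 1) * D = q * (q - 1) * n.
Proof. by rewrite -[in RHS](divnK top_dvdn); nia. Qed.

Lemma top_leader_max s : s < n -> coset_leader q n s -> s <= D.
Proof.
move=> s_lt s_leader; rewrite -(@leq_pmul2l (2 * (q ^ 2 + 1))) ?top_leader_eq.
  exact: coset_leader_le.
by rewrite muln_gt0 addn1.
Qed.

Lemma top_coset_leader : coset_leader q n D.
Proof.
apply/(coset_leaderP n_gt0 (coprime_base_power _ m_gt0)) => i.
rewrite top_leader_residue leq_mul2l.
by case: (i %% 4) (ltn_pmod i (isT : 0 < 4)) => [|[|[|[|j]]]] //= _; lia.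
Qed.

Lemma size_top_coset : size (cyc_coset q n D) = 4.
Proof.
have N_gt0 : 0 < N by rewrite divn_gt0 ?(dvdn_leq n_gt0 top_dvdn) ?addn1.
rewrite -[4](size_map (muln N) top_orbit); apply/perm_size/uniq_perm.
- exact: undup_uniq.
- by rewrite /= !inE !eqn_pmul2l //; lia.
move=> x; apply/(cyc_cosetP n_gt0 (coprime_base_power _ m_gt0))/mapP
  => [[i ->] | [y /(nthP 0) [j j_lt <-] ->]].
  by exists (nth 0 top_orbit (i %% 4)); rewrite ?top_leader_residue ?mem_nth ?ltn_mod.
by exists j; rewrite top_leader_residue modn_small.
Qed.

End TopLeader.

Theorem lemma6 (q m : nat) :
  (exists k, 0 < k /\ q = 2 ^ k) ->
  m %% 4 = 2 -> 6 <= m ->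
  let n := q ^ m + 1 in
  2 * (q ^ 2 + 1) * delta1 q n = q * (q - 1) * (q ^ m + 1) /\
  size (cyc_coset q n (delta1 q n)) = 4.
Proof.
move=> [k [k_gt0 ->]] m_mod4 _ n.
have p_gt0 : 0 < 2 ^ k.-1 by rewrite expn_gt0.
rewrite /n; have -> : 2 ^ k = 2 * 2 ^ k.-1 by rewrite -expnS prednK.
rewrite (delta1_eq (top_leader_lt p_gt0 m_mod4) (top_coset_leader p_gt0 m_mod4)
  (top_leader_max p_gt0 m_mod4)).
by rewrite top_leader_eq ?size_top_coset.
Qed.
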